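(* Let $f:\mathbb{R}^n\to\mathbb{R}$ satisfy: (A1) $f\in C^\infty(\mathbb{R}^n)$; (A2) there is $M>0$ with $f(x)>0$ for all $x\notin B(0,M)$; (A3) $\nabla f(p)\neq0$ for all $p\in\mathcal{B}:=\{p:f(p)=0\}$, with $\mathcal{B}\neq\emptyset$. Let $d(x)=\min_{q\in\mathcal{B}}\|x-q\|$ and $\Omega_\sigma=\{x:d(x)<\sigma\}$. Let $\beta\in(0,1)$ and let $\sigma_2>0$ be such that for all $p\in\mathcal{B}$ and all $0<r<\sigma_2$ one has $\mathcal{B}\cap B(p,r)\subseteq\Gamma_r(p)$, where $\Gamma_r(p)=\{p+v: |v^T\nabla f(p)|<\beta r\|\nabla f(p)\|\}$. Let $x\in\Omega_{\sigma_2}$, let $p\in\mathcal{B}$ with $d(x)=\|x-p\|$, and let $r=d(x)$. Then the hyperplane \[R=\{p+v:\ v\in\mathbb{R}^n,\ v^T\nabla f(p)=-\mathrm{sgn}(f(x))\,\beta r\|\nabla f(p)\|\}\] satisfies $\mathrm{sgn}(f(y))=-\mathrm{sgn}(f(x))$ for all $y\in R\cap B(p,r)$.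
   Context: $\|\cdot\|$ is the Euclidean norm, $B(p,r)$ the open Euclidean ball, $\mathrm{sgn}$ the sign function. Such a $\sigma_2>0$ exists for every $\beta\in(0,1)$ under (A1)–(A3). *)

From HB Require Import structures.
From mathcomp Require Import all_boot all_order all_algebra.
From mathcomp Require Import all_classical all_reals all_analysis.
Set Implicit Arguments. Unset Strict Implicit. Unset Printing Implicit Defensive.
Import Order.TTheory GRing.Theory Num.Theory.
Import numFieldNormedType.Exports.
Local Open Scope classical_set_scope.
Local Open Scope ring_scope.

Section Defs.
Variables (R : realType) (n : nat).
Local Notation V := 'rV[R]_n.

(* Euclidean inner product and Euclidean norm on R^n
   (the library norm on matrices is the sup norm, hence not used). *)
Definition dotv (u v : V) : R := \sum_(i < n) u ord0 i * v ord0 i.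
Definition enorm (v : V) : R := Num.sqrt (dotv v v).

Definition eball (p : V) (r : R) : set V := [set y | enorm (y - p) < r].

Definition iter_dir (vs : seq V) (f : V -> R) : V -> R :=
  foldr (fun v g => fun x => 'D_v g x) f vs.

(* C^infinity: every iterated directional derivative exists and is
   (Frechet) differentiable everywhere; hence all partial derivatives of
   every order exist and are continuous. *)
Definition smooth (f : V -> R) : Prop :=
  forall (vs : seq V) (x : V), differentiable (iter_dir vs f) x.

Definition grad (f : V -> R) (p : V) : V :=
  \row_(i < n) 'D_(delta_mx ord0 i : V) f p.

Definition zeroset (f : V -> R) : set V := [set q | f q = 0].

Definition distB (f : V -> R) (x : V) : R :=
  inf [set enorm (x - q) | q in zeroset f].

End Defs.

From HB Require Import structures.
From mathcomp Require Import all_boot all_order all_algebra.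
From mathcomp Require Import all_classical all_reals all_analysis.
From mathcomp Require Import lra.
Set Implicit Arguments.
Unset Strict Implicit.
Unset Printing Implicit Defensive.
Import Order.TTheory GRing.Theory Num.Theory.
Import numFieldNormedType.Exports.
Local Open Scope classical_set_scope.
Local Open Scope ring_scope.

(* Write y = p + v.  For 0 < l <= 1 the point p + l v lies in B(p, l r) and
   |(l v)^T grad f(p)| = beta (l r) |grad f(p)|, so it lies outside
   Gamma_{l r}(p) and therefore is not a root of f.  Hence sgn f is constant
   on the half-open segment ]p, y], and near p it is the sign of the
   directional derivative v^T grad f(p) = - sgn(f x) beta r |grad f(p)|. *)

Lemma sgr_eq_mul_gt0 (R : realDomainType) (a b : R) :
  0 < a * b -> Num.sg a = Num.sg b.
Proof. by rewrite -sgr_gt0 sgrM; case: (sgrP a) => _; case: (sgrP b) => _; lra. Qed.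

Section SignAlongRay.
Context {R : realType}.

Lemma sgr_eq_nonvanishing (phi : R -> R) (a b : R) : a <= b ->
  {within `[a, b], continuous phi} -> (forall t, a <= t <= b -> phi t != 0) ->
  Num.sg (phi a) = Num.sg (phi b).
Proof.
move=> ab phi_cont phi_neq0.
apply: sgr_eq_mul_gt0; rewrite ltNge; apply/negP => ab_le0.
have [c] : exists2 c, c \in `[a, b] & phi c = 0.
  apply: IVT => //; rewrite ge_min le_max.
  by case: (lerP (phi a) 0) => ?; case: (lerP (phi b) 0) => ? //=; nra.
by rewrite in_itv /= => /phi_neq0 /eqP.
Qed.

Context {V : normedModType R}.

Lemma sgr_derive_near_root (f : V -> R) (p v : V) :
  derivable f p v -> f p = 0 -> 'D_v f p != 0 ->
  exists2 c : R, 0 < c <= 1 & Num.sg (f (p + c *: v)) = Num.sg ('D_v f p).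
Proof.
move=> dfv fp0 Dv_neq0.
have q_dnbhs : (fun h : R => h^-1 * f (h *: v + p)) @ 0^' --> 'D_v f p.
  have -> : (fun h : R => h^-1 * f (h *: v + p)) =
            (fun h : R => h^-1 *: ((f \o shift p) (h *: v) - f p)).
    by apply/funext => h; rewrite fp0 subr0.
  exact: dfv.
have q_cvg : (fun h : R => h^-1 * f (h *: v + p)) @ 0^'+ --> 'D_v f p.
  apply: cvg_trans q_dnbhs; apply: cvg_app; apply: within_subset => t.
  exact: lt0r_neq0.
have qD_near : \forall h \near 0^'+, 0 < h^-1 * f (h *: v + p) * 'D_v f p.
  apply: (cvgr_gt _ (cvgMr_tmp (b := 'D_v f p) q_cvg)).
  by rewrite -expr2 exprn_even_gt0.
have [c /andP[c_gt0 c_le1] qD_gt0] :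
    exists2 c : R, 0 < c <= 1 & 0 < c^-1 * f (c *: v + p) * 'D_v f p.
  near (0:R)^'+ => c; exists c; first (apply/andP; split); near: c.
  - exact: nbhs_right_gt.
  - exact: nbhs_right_le.
  - exact: qD_near.
exists c; first by rewrite c_gt0.
by rewrite -(sgr_eq_mul_gt0 qD_gt0) sgrM sgrV (gtr0_sg c_gt0) mul1r addrC.
Unshelve. all: by end_near. Qed.

Lemma sgr_along_ray (f : V -> R) (p v : V) :
  continuous f -> derivable f p v -> f p = 0 -> 'D_v f p != 0 ->
  (forall l, 0 < l <= 1 -> f (p + l *: v) != 0) ->
  Num.sg (f (p + v)) = Num.sg ('D_v f p).
Proof.
move=> f_cont dfv fp0 Dv_neq0 ray_neq0.
have [c /andP[c_gt0 c_le1] <-] := sgr_derive_near_root dfv fp0 Dv_neq0.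
rewrite -[in LHS](scale1r v); apply/esym.
apply: (sgr_eq_nonvanishing (phi := fun l => f (p + l *: v))) => //.
- apply: continuous_subspaceT => l; apply: continuous_comp; last exact: f_cont.
  by apply: continuousD; [exact: cvg_cst | exact: continuousZr_tmp].
- by move=> l /andP[c_le_l l_le1]; rewrite ray_neq0 // (lt_le_trans c_gt0 c_le_l).
Qed.

End SignAlongRay.

Section EuclideanSpace.
Context {R : realType} {n : nat}.
Local Notation V := 'rV[R]_n.

Lemma dotvZl (a : R) (u w : V) : dotv (a *: u) w = a * dotv u w.
Proof. by rewrite /dotv mulr_sumr; apply: eq_bigr => i _; rewrite mxE mulrA. Qed.

Lemma dotvC (u w : V) : dotv u w = dotv w u.
Proof. by apply: eq_bigr => i _; rewrite mulrC. Qed.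

Lemma dotv_gt0 (u : V) : u != 0 -> 0 < dotv u u.
Proof.
move=> u_neq0; have coef_sqr_ge0 i : 0 <= u ord0 i * u ord0 i by rewrite -expr2 sqr_ge0.
rewrite lt0r sumr_ge0 ?andbT //; apply: contra u_neq0 => /eqP/psumr_eq0P u0.
apply/eqP/rowP => i; have /eqP := u0 (fun j _ => coef_sqr_ge0 j) i isT.
by rewrite mulf_eq0 orbb mxE => /eqP.
Qed.

Lemma enorm_ge0 (u : V) : 0 <= enorm u.
Proof. exact: sqrtr_ge0. Qed.

Lemma enorm_gt0 (u : V) : u != 0 -> 0 < enorm u.
Proof. by move=> u_neq0; rewrite sqrtr_gt0 dotv_gt0. Qed.

Lemma enorm0 : enorm (0 : V) = 0.
Proof. by rewrite /enorm -(scale0r 0) dotvZl mul0r sqrtr0. Qed.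

Lemma enormZ (a : R) (u : V) : enorm (a *: u) = `|a| * enorm u.
Proof.
by rewrite /enorm dotvZl dotvC dotvZl mulrA -expr2 sqrtrM ?sqr_ge0 // sqrtr_sqr.
Qed.

Lemma derive_dotv_grad (f : V -> R) (p v : V) :
  differentiable f p -> 'D_v f p = dotv v (grad f p).
Proof.
move=> dfp; rewrite deriveE // {1}(row_sum_delta v) linear_sum.
by apply: eq_bigr => i _; rewrite linearZ /= -deriveE // mxE.
Qed.

Lemma distB_zeroset (f : V -> R) (x : V) : zeroset f x -> distB f x = 0.
Proof.
move=> fx0; set E := [set enorm (x - q) | q in zeroset f].
have E_ge0 : lbound E 0 by move=> _ [q _ <-]; exact: enorm_ge0.
have E0 : E 0 by exists x; rewrite // subrr enorm0.
apply/eqP; rewrite eq_le lb_le_inf ?andbT //; last by exists 0.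
by apply: ge_inf E0; exists 0.
Qed.

Definition tangent_slab (f : V -> R) (beta : R) (p : V) (r : R) : set V :=
  [set p + v | v in [set v | `|dotv v (grad f p)| < beta * r * enorm (grad f p)]].

Lemma nonroot_off_slab (f : V -> R) (beta r : R) (p v : V) :
  zeroset f `&` eball p r `<=` tangent_slab f beta p r -> enorm v < r ->
  beta * r * enorm (grad f p) <= `|dotv v (grad f p)| -> f (p + v) != 0.
Proof.
move=> slab v_lt_r slab_le; apply/eqP => fpv0.
have [u u_in /addrI u_v] : tangent_slab f beta p r (p + v).
  by apply: slab; split => //; rewrite /eball /= (addrC p) addrK.
by move: u_in; rewrite /= u_v ltNge slab_le.
Qed.

Lemma ray_nonroot (f : V -> R) (beta sigma r : R) (p v : V) :
  (forall r', 0 < r' < sigma ->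
     zeroset f `&` eball p r' `<=` tangent_slab f beta p r') ->
  r < sigma -> enorm v < r ->
  `|dotv v (grad f p)| = beta * r * enorm (grad f p) ->
  forall l, 0 < l <= 1 -> f (p + l *: v) != 0.
Proof.
move=> slab r_lt v_lt_r v_width l /andP[l_gt0 l_le1].
have r_gt0 : 0 < r := le_lt_trans (enorm_ge0 v) v_lt_r.
apply: (@nonroot_off_slab _ beta (l * r)).
- apply: slab; rewrite mulr_gt0 //=; apply: le_lt_trans r_lt.
  by rewrite ler_piMl // ltW.
- by rewrite enormZ gtr0_norm // ltr_pM2l.
- by rewrite dotvZl normrM (gtr0_norm l_gt0) v_width !mulrA (mulrC beta l).
Qed.

End EuclideanSpace.

Theorem corollary1 (R : realType) (n : nat) (f : 'rV[R]_n -> R)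
  (A1 : smooth f)
  (A2 : exists M : R, 0 < M /\
          forall x : 'rV[R]_n, ~ eball 0 M x -> 0 < f x)
  (A3 : (forall p, zeroset f p -> grad f p != 0) /\ zeroset f !=set0)
  (beta : R) (hbeta : 0 < beta < 1)
  (sigma2 : R) (hsigma2 : 0 < sigma2)
  (hGamma : forall p, zeroset f p -> forall r : R, 0 < r < sigma2 ->
      zeroset f `&` eball p r `<=`
      [set p + v | v in [set v | `|dotv v (grad f p)| < beta * r * enorm (grad f p)]])
  (x : 'rV[R]_n) (hx : distB f x < sigma2)
  (p : 'rV[R]_n) (hp : zeroset f p) (hxp : distB f x = enorm (x - p)) :
  let r := distB f x in
  forall y : 'rV[R]_n,
    [set p + v | v in [set v | dotv v (grad f p)
        = - Num.sg (f x) * beta * r * enorm (grad f p)]] y ->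
    eball p r y ->
    Num.sg (f y) = - Num.sg (f x).
Proof.
move=> r y [v v_level <-{y}]; rewrite /eball /= addrC addKr => v_lt_r.
have f_cont : continuous f := fun z => differentiable_continuous (A1 [::] z).
have dfp : differentiable f p := A1 [::] p.
have r_gt0 : 0 < r := le_lt_trans (enorm_ge0 v) v_lt_r.
have fx_neq0 : f x != 0 := contra_neq (@distB_zeroset _ _ f x) (lt0r_neq0 r_gt0).
have width_gt0 : 0 < beta * r * enorm (grad f p).
  by rewrite !mulr_gt0 ?(andP hbeta).1 //; apply/enorm_gt0/A3.1.
have {}v_level : dotv v (grad f p) = - Num.sg (f x) * (beta * r * enorm (grad f p)).
  by rewrite v_level !mulrA.
have v_width : `|dotv v (grad f p)| = beta * r * enorm (grad f p).
  by rewrite v_level normrM normrN normr_sg fx_neq0 mul1r gtr0_norm.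
have D_sg : Num.sg ('D_v f p) = - Num.sg (f x).
  by rewrite derive_dotv_grad // v_level sgrM sgrN sgr_id (gtr0_sg width_gt0) mulr1.
rewrite -D_sg; apply: sgr_along_ray => //.
- exact: diff_derivable.
- by rewrite -sgr_eq0 D_sg oppr_eq0 sgr_eq0.
- exact: ray_nonroot (hGamma p hp) hx v_lt_r v_width.
Qed.
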